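(* Let $h\in\mathbb N$ and $u,v\in\mathfrak S_n$ with $u<v$, and let $F$ be an $h$-flipclass of paths from $u$ to $v$. The following are equivalent: (1) the map $i_{TS_F}:F\to P^{TS_F}_h((u,0),(v,h))$ is bijective, i.e. every path of $TS_F$ from $(u,0)$ to $(v,h)$ is effective; (2) for all vertices $(a,i),(b,i+2)$ of $TS_F$ with $(a,i)\le(b,i+2)$ in the poset induced by $TS_F$, the interval $[(a,i),(b,i+2)]$ is a diamond (contains exactly two elements besides its endpoints); and the flip operators $\bar f_1,\dots,\bar f_{h-1}$ act transitively on $P^{TS_F}_h((u,0),(v,h))$, where $\bar f_i$ sends a path $((a_0,0),\dots,(a_h,h))$ to the path obtained by replacing $(a_i,i)$ by the other middle element of the diamond $[(a_{i-1},i-1),(a_{i+1},i+1)]$.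
   Context: $\mathfrak S_n$ is the symmetric group on $[n]$, $T$ its transpositions, $\ell$ the length w.r.t. simple transpositions. The Bruhat graph $B(\mathfrak S_n)$ has an edge $x\xrightarrow{t}y$ iff $yx^{-1}=t\in T$ and $\ell(x)<\ell(y)$; Bruhat order: $x\le y$ iff there is a directed path from $x$ to $y$. $P_h(u,v)$ is the set of paths $u=x_0\to\cdots\to x_h=v$ of length $h$. Between two fixed vertices there are $0$ or $2$ paths of length $2$, each the flip of the other; the $i$-th flip operator $f_i$ on $P_h(u,v)$ replaces $x_{i-1}\to x_i\to x_{i+1}$ by its flip; orbits of $\langle f_1,\dots,f_{h-1}\rangle$ on $P_h(u,v)$ are the $h$-flipclasses of paths from $u$ to $v$. The time-support graph $TS_F$ has vertices $(a,i)$ ($0\le i\le h$) such that some path $(x_0,\dots,x_h)\in F$ has $x_i=a$, and edges $(a,i)\xrightarrow{t}(b,i+1)$ whenever some path of $F$ contains $x_i=a\xrightarrow{t}b=x_{i+1}$; it is acyclic and induces a partial order (reachability) on its vertices. $P^{TS_F}_h((u,0),(v,h))$ is the set of paths of length $h$ from $(u,0)$ to $(v,h)$ in $TS_F$, and $i_{TS_F}$ sends $(x_0,\dots,x_h)\in F$ to $((x_0,0),\dots,(x_h,h))$ (it is always injective). A path of $TS_F$ is effective if it is a subpath of $i_{TS_F}(\Gamma)$ for some $\Gamma\in F$. *)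

From mathcomp Require Import all_boot all_fingroup.
Set Implicit Arguments. Unset Strict Implicit. Unset Printing Implicit Defensive.

Section Bruhat.
Variable n : nat.
Local Notation Sn := {perm 'I_n}.

Definition is_transp (t : Sn) : bool :=
  [exists i : 'I_n, exists j : 'I_n, (i != j) && (t == tperm i j)].

(* Coxeter length = number of inversions *)
Definition ell (x : Sn) : nat :=
  #|[set p : 'I_n * 'I_n | (p.1 < p.2) && (x p.2 < x p.1)]|.

Definition bedge (x y : Sn) : bool := is_transp (y * x^-1)%g && (ell x < ell y).

Definition bruhat_le (x y : Sn) : bool := connect bedge x y.
Definition bruhat_lt (x y : Sn) : bool := (x != y) && bruhat_le x y.

Definition tat (T : Type) (k : nat) (t : k.+1.-tuple T) (i : nat) : T :=
  tnth t (inord i).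

Definition is_bpath (h : nat) (u v : Sn) (G : h.+1.-tuple Sn) : bool :=
  [&& tat G 0 == u, tat G h == v &
      [forall i : 'I_h, bedge (tat G i) (tat G i.+1)]].

Definition Pset (h : nat) (u v : Sn) : {set h.+1.-tuple Sn} :=
  [set G | @is_bpath h u v G].

(* the other middle vertex of the (0 or 2) length-2 paths x -> . -> z, besides y *)
Definition flip_mid (x y z : Sn) : Sn :=
  odflt y [pick w | [&& w != y, bedge x w & bedge w z]].

Definition flip (h : nat) (i : nat) (G : h.+1.-tuple Sn) : h.+1.-tuple Sn :=
  [tuple (if (j : nat) == i then flip_mid (tat G i.-1) (tat G i) (tat G i.+1)
          else tnth G j) | j < h.+1].

End Bruhat.

(* y is obtained from x by applying a finite word in the operators f i, lo <= i <= hi;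
   for involutions this is the orbit of x under the generated group *)
Definition gen_reach (T : Type) (f : nat -> T -> T) (lo hi : nat) (x y : T) : Prop :=
  exists w : seq nat, all (fun i => lo <= i <= hi) w /\ foldr f x w = y.

Section TimeSupport.
Variables (n h : nat).
Local Notation Sn := {perm 'I_n}.
Local Notation V := (Sn * 'I_h.+1)%type.
Variable F : {set h.+1.-tuple Sn}.

Definition flipclass (u v : Sn) : Prop :=
  exists2 G, G \in @Pset n h u v &
    (forall G', G' \in F <-> gen_reach (@flip n h) 1 h.-1 G G').

Definition TSvert : {set V} := [set p : V | [exists G in F, tnth G p.2 == p.1]].

Definition TSedge (p q : V) : bool :=
  ((q.2 : nat) == (p.2 : nat).+1) &&
  [exists G in F, (tnth G p.2 == p.1) && (tnth G q.2 == q.1)].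

Definition TSle (p q : V) : bool := connect TSedge p q.

Definition TSinterval (p q : V) : {set V} :=
  [set w in TSvert | TSle p w && TSle w q].

Definition diamond (p q : V) : bool := #|TSinterval p q :\ p :\ q| == 2.

Definition is_TSpath (u v : Sn) (p : h.+1.-tuple V) : bool :=
  [&& tat p 0 == (u, ord0), tat p h == (v, ord_max) &
      [forall i : 'I_h, TSedge (tat p i) (tat p i.+1)]].

Definition PTS (u v : Sn) : {set h.+1.-tuple V} := [set p | is_TSpath u v p].

Definition iTS (G : h.+1.-tuple Sn) : h.+1.-tuple V := [tuple (tnth G i, i) | i < h.+1].

Definition TSmid (x y z : V) : V :=
  odflt y [pick w in TSinterval x z | [&& w != x, w != z & w != y]].

Definition fbar (i : nat) (p : h.+1.-tuple V) : h.+1.-tuple V :=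
  [tuple (if (j : nat) == i then TSmid (tat p i.-1) (tat p i) (tat p i.+1)
          else tnth p j) | j < h.+1].

End TimeSupport.

(* Two permutations at distance two in the Bruhat graph have exactly two middle
   vertices.  If y = (a b) x and z = (c d) y, then z x^-1 is either a product of two
   commuting disjoint transpositions, or a 3-cycle; a 3-cycle has three factorisations
   into two transpositions, and of the two candidate middles other than y exactly one
   has increasing lengths.  Hence in TS_F the interval between the vertices at times
   i-1 and i+1 of a path i_TS(G), G in F, consists of the vertices at time i of i_TS(G)
   and of i_TS(f_i G), so that bar f_i (i_TS G) = i_TS (f_i G).
   If every path of TS_F is effective, every interval [(a,i),(b,i+2)] lies on such a
   path and is therefore a diamond, and the transitivity of the f_i on F transfers to
   the bar f_i.  Conversely, i_TS is always injective, and if the bar f_i act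
   transitively, every path of TS_F is reached by flips from an effective one, hence
   is effective. *)

From mathcomp Require Import all_boot all_fingroup zify.
Set Implicit Arguments. Unset Strict Implicit. Unset Printing Implicit Defensive.

Ltac case_tperm := repeat match goal with
  | |- context [fun_of_perm.body (tperm ?x ?y) ?z] =>
      is_var z; case: (tpermP x y z) => [?|?|? ?]; subst
  end.

Section Transpositions.
Variable T : finType.
Local Open Scope group_scope.

Lemma tperm_mul_moves (s : {perm T}) (e f g h : T) : e != f ->
  s = tperm g h * tperm e f -> s != 1 -> s e != e.
Proof.
move=> ef ->; apply: contraNN; rewrite permM => /eqP.
have tpermE k : tperm e f k = e -> k = f by move/(congr1 (tperm e f)); rewrite tpermK tpermL.
case: (tpermP g h e) => [<-|<-|_ _]; first by move/tpermE->; rewrite tperm2.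
  by move/tpermE->; rewrite tpermC tperm2.
by rewrite tpermL => /eqP; rewrite eq_sym (negbTE ef).
Qed.

Lemma tperm_mul_invol (s : {perm T}) (e f g h : T) : e != f ->
  s = tperm g h * tperm e f -> s * s = 1 -> s != 1 -> s e = f.
Proof.
move=> ef sE ss1 s1; have sse : s (s e) = e by rewrite -permM ss1 perm1.
move: s1 sse; rewrite sE !permM.
case: (tpermP g h e) => [<-|<-|_ _]; last by rewrite tpermL.
  case: (tpermP e f h) => [->|->|_ _] //; first by rewrite tperm2 eqxx.
  by rewrite tpermR tpermL => _ /eqP; rewrite eq_sym (negbTE ef).
rewrite [tperm g e]tpermC; case: (tpermP e f g) => [->|->|_ _] //; first by rewrite tperm2 eqxx.
by rewrite tpermR tpermL => _ /eqP; rewrite eq_sym (negbTE ef).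
Qed.

Lemma tperm_factor_disjoint (a b c d e f g h : T) :
  a != b -> c != d -> e != f -> c != a -> c != b -> d != a -> d != b ->
  tperm g h * tperm e f = tperm c d * tperm a b ->
  tperm e f = tperm a b \/ tperm e f = tperm c d.
Proof.
move=> /eqP ab /eqP cd ef /eqP ca /eqP cb /eqP da /eqP db E.
have ss1 : tperm c d * tperm a b * (tperm c d * tperm a b) = 1.
  by apply/permP => k; rewrite !permM perm1; case_tperm; congruence.
have s1 : tperm c d * tperm a b != 1.
  by apply/eqP => /permP/(_ a); rewrite !permM perm1; case_tperm; congruence.
move: (tperm_mul_invol ef (esym E) ss1 s1); rewrite permM.
move/eqP: ef; case_tperm; move=> ef Ef; subst f;
  (by left) || (by right) || (by left; rewrite tpermC) || (by right; rewrite tpermC) || congruence.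
Qed.

Lemma tperm_factor_3cycle (s a c e f g h : T) : s != a -> s != c -> a != c -> e != f ->
  tperm g h * tperm e f = tperm s c * tperm s a ->
  [\/ tperm e f = tperm s a, tperm e f = tperm s c | tperm e f = tperm a c].
Proof.
move=> /eqP sa /eqP sc /eqP ac ef E.
have s1 : tperm s c * tperm s a != 1.
  by apply/eqP => /permP/(_ s); rewrite !permM perm1; case_tperm; congruence.
have E' : tperm s c * tperm s a = tperm g h * tperm f e by rewrite -E [tperm f e]tpermC.
have fe : f != e by rewrite eq_sym.
move: (tperm_mul_moves ef (esym E) s1) (tperm_mul_moves fe E' s1); rewrite !permM.
move/eqP: ef; case_tperm; rewrite ?eqxx // => ef _ _;
  first [ by constructor 1 | by constructor 2 | by constructor 3
        | by constructor 1; rewrite tpermC | by constructor 2; rewrite tpermC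
        | by constructor 3; rewrite tpermC | congruence ].
Qed.

End Transpositions.

Section BruhatEdges.
Variable n : nat.
Local Notation Sn := {perm 'I_n}.
Local Open Scope group_scope.

Lemma ell_tperm_lt (x : Sn) (i j : 'I_n) : (i < j)%N -> (x i < x j)%N ->
  (ell x < ell (tperm i j * x))%N.
Proof.
move=> ij xij; set s := tperm i j.
have sxE k : (s * x) k = x (s k) by rewrite permM.
(* [g] relabels a pair by [s] whenever this keeps it increasing: it maps the
   inversions of [x] injectively to inversions of [s * x], and misses [(i, j)]. *)
pose g (p : 'I_n * 'I_n) := if (s p.1 < s p.2)%N then (s p.1, s p.2) else p.
have gK (p : 'I_n * 'I_n) : (p.1 < p.2)%N -> g (g p) = p.
  case: (boolP (s p.1 < s p.2)%N) => H; rewrite /g ?H ?(negbTE H) //=.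
  by rewrite !tpermK => ->; rewrite -surjective_pairing.
rewrite /ell; set A := [set p : 'I_n * 'I_n | _]; set B := [set p : 'I_n * 'I_n | _].
have g_inj : {in A &, injective g}.
  by move=> p q; rewrite !inE => /andP[p12 _] /andP[q12 _] E; rewrite -(gK p) // E gK.
rewrite -(card_in_imset g_inj); apply: proper_card; apply/properP; split.
  apply/subsetP => _ /imsetP[[p1 p2] + ->]; rewrite inE /= => /andP[p12 xp].
  rewrite /g /=; case: ifP => Hs; rewrite inE /= !sxE ?Hs ?tpermK //= p12 /=.
  move/negbT: Hs; move: p12 xp; rewrite /s.
  case: (tpermP i j p1) => [->|->|/eqP + /eqP]; case: (tpermP i j p2) => [->|->|/eqP + /eqP];
    rewrite -?val_eqE /=; lia.
exists (i, j); first by rewrite inE /= ij !sxE /s tpermL tpermR.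
apply/imsetP => -[p]; rewrite inE => /andP[p12 xp] E.
have : g (i, j) = p by rewrite E gK.
rewrite /g /= /s tpermL tpermR ltnNge (ltnW ij) /= => Ep.
by move: xp; rewrite -Ep /=; lia.
Qed.

Lemma is_transp_tperm (i j : 'I_n) : i != j -> is_transp (tperm i j).
Proof. by move=> ij; apply/existsP; exists i; apply/existsP; exists j; rewrite ij eqxx. Qed.

Lemma bedge_tperm_lt (x : Sn) (i j : 'I_n) : (i < j)%N ->
  bedge x (tperm i j * x) = (x i < x j)%N.
Proof.
move=> ij; have ij' : i != j by rewrite -val_eqE /= neq_ltn ij.
rewrite /bedge mulgK is_transp_tperm //=.
case: (ltngtP (x i) (x j)) => [|xji|/val_inj/perm_inj eq_ij]; first exact: ell_tperm_lt.
  apply/negbTE; rewrite -leqNgt ltnW //.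
  have := @ell_tperm_lt (tperm i j * x) i j ij.
  by rewrite !permM tpermL tpermR mulgA tperm2 mul1g; apply.
by rewrite eq_ij eqxx in ij'.
Qed.

Lemma bedge_tperm (x : Sn) (i j : 'I_n) : i != j ->
  bedge x (tperm i j * x) = ((i < j)%N == (x i < x j)%N).
Proof.
move=> ij; case: (ltngtP i j) => [lt|gt|/val_inj eq_ij]; first by rewrite bedge_tperm_lt.
  rewrite tpermC bedge_tperm_lt //= ltn_neqAle leqNgt val_eqE (inj_eq perm_inj).
  by rewrite eq_sym ij.
by rewrite eq_ij eqxx in ij.
Qed.

Lemma bedge_tperm_ex (x y : Sn) : bedge x y -> exists i j : 'I_n, i != j /\ y = tperm i j * x.
Proof.
case/andP => /existsP[i /existsP[j /andP[ij /eqP E]]] _.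
by exists i, j; rewrite -E mulgVK.
Qed.

End BruhatEdges.

Section BruhatMiddles.
Variable n : nat.
Local Notation Sn := {perm 'I_n}.
Local Open Scope group_scope.

Definition bmid (x z w : Sn) : bool := bedge x w && bedge w z.

Lemma bmid_tperm (x z w : Sn) : bmid x z w ->
  exists e f g h : 'I_n, [/\ e != f, w = tperm e f * x & z = tperm g h * tperm e f * x].
Proof.
case/andP => /bedge_tperm_ex[e [f [ef ->]]] /bedge_tperm_ex[g [h [_ ->]]].
by exists e, f, g, h; rewrite mulgA.
Qed.

Lemma bmid_3cycle_xor (x y z : Sn) (s a c : 'I_n) : s != a -> s != c -> a != c ->
  y = tperm s a * x -> z = tperm s c * y -> bedge x y -> bedge y z ->
  bmid x z (tperm s c * x) = ~~ bmid x z (tperm a c * x).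
Proof.
move=> sa sc ac -> -> xy yz.
have [sa' sc' ac'] : [/\ s <> a, s <> c & a <> c] by split; apply/eqP.
have zE2 : tperm s c * (tperm s a * x) = tperm a c * (tperm s c * x).
  by apply/permP => k; rewrite !permM; congr (x _); case_tperm; congruence.
have zE3 : tperm s c * (tperm s a * x) = tperm s a * (tperm a c * x).
  by apply/permP => k; rewrite !permM; congr (x _); case_tperm; congruence.
rewrite /bmid {1}zE2 zE3 !bedge_tperm // !permM tpermR tpermL !tpermD //
  ?(eq_sym a) ?(eq_sym c) //.
move: xy yz; rewrite !bedge_tperm // !permM tpermL tpermD //.
have xD (p q : 'I_n) : p != q -> (x p : nat) != x q.
  by move=> pq; rewrite val_eqE (inj_eq perm_inj).
move: (xD _ _ sa) (xD _ _ sc) (xD _ _ ac); rewrite -!val_eqE in sa sc ac *.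
case: (ltngtP s a); case: (ltngtP s c); case: (ltngtP a c);
case: (ltngtP (x s) (x a)); case: (ltngtP (x s) (x c)); case: (ltngtP (x a) (x c)) => //=; lia.
Qed.

Lemma bmid_3cycle (x y z : Sn) (s a c : 'I_n) : s != a -> s != c -> a != c ->
  y = tperm s a * x -> z = tperm s c * y -> bedge x y -> bedge y z ->
  exists2 y', y' != y & forall w, bmid x z w = (w == y) || (w == y').
Proof.
move=> sa sc ac yE zE xy yz.
have := bmid_3cycle_xor sa sc ac yE zE xy yz.
set y2 := tperm s c * x; set y3 := tperm a c * x => xor23.
have mids w : bmid x z w -> [\/ w = y, w = y2 | w = y3].
  case/bmid_tperm => e [f [g [h [ef -> zE']]]].
  have E : tperm g h * tperm e f = tperm s c * tperm s a.
    by apply: (mulIg x); rewrite -zE' zE yE mulgA.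
  by rewrite yE; case: (tperm_factor_3cycle sa sc ac ef E) => ->; constructor.
have yxz : bmid x z y by rewrite /bmid xy yz.
have xa_neq (b : 'I_n) : b != a -> x b != x a by rewrite (inj_eq perm_inj).
have [as_ cs ca] : [/\ a != s, c != s & c != a] by rewrite !(eq_sym _ s) (eq_sym c).
have y2y : y2 != y.
  by apply: contraNneq (xa_neq c ca) => /permP/(_ s); rewrite yE !permM !tpermL => ->.
have y3y : y3 != y.
  by apply: contraNneq (xa_neq s sa) => /permP/(_ s); rewrite yE !permM tpermL tpermD // => ->.
have [m2 | m3] := boolP (bmid x z y2).
  have m3 : ~~ bmid x z y3 by rewrite -xor23.
  exists y2 => // w; apply/idP/idP => [mw|/orP[]/eqP-> //].
  by case: (mids w mw) => Ew; rewrite Ew ?eqxx ?orbT //; rewrite Ew (negbTE m3) in mw.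
have m2 : bmid x z y3 by rewrite -[bmid _ _ _]negbK -xor23.
exists y3 => // w; apply/idP/idP => [mw|/orP[]/eqP-> //].
by case: (mids w mw) => Ew; rewrite Ew ?eqxx ?orbT //; rewrite Ew (negbTE m3) in mw.
Qed.

Lemma bmid_disjoint (x y z : Sn) (a b c d : 'I_n) : a != b -> c != d ->
  c != a -> c != b -> d != a -> d != b ->
  y = tperm a b * x -> z = tperm c d * y -> bedge x y -> bedge y z ->
  exists2 y', y' != y & forall w, bmid x z w = (w == y) || (w == y').
Proof.
move=> ab cd ca cb da db yE zE xy yz.
have [ac ad bc bd] : [/\ a != c, a != d, b != c & b != d] by rewrite !(eq_sym a) !(eq_sym b).
have commE : tperm c d * tperm a b = tperm a b * tperm c d.
  apply/permP => k; rewrite !permM.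
  by move: ca cb da db => /eqP ? /eqP ? /eqP ? /eqP ?; case_tperm; congruence.
have zE' : z = tperm a b * (tperm c d * x) by rewrite zE yE !mulgA commE.
exists (tperm c d * x).
  apply: contraNneq ab => /permP/(_ a); rewrite yE !permM tpermL tpermD //.
  by move/perm_inj->.
move=> w; apply/idP/idP => [/bmid_tperm[e [f [g [h [ef -> zEw]]]]] | /orP[]/eqP->].
- have E : tperm g h * tperm e f = tperm c d * tperm a b.
    by apply: (mulIg x); rewrite -zEw zE yE mulgA.
  by case: (tperm_factor_disjoint ab cd ef ca cb da db E) => ->; rewrite yE eqxx ?orbT.
- by rewrite /bmid xy yz.
rewrite /bmid zE' !bedge_tperm // !permM !tpermD //.
by move: xy yz; rewrite zE yE !bedge_tperm // !permM !tpermD // => -> ->.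
Qed.

Lemma bmid_two (x y z : Sn) : bedge x y -> bedge y z ->
  exists2 y', y' != y & forall w, bmid x z w = (w == y) || (w == y').
Proof.
move=> xy yz.
have [a [b [ab yE]]] := bedge_tperm_ex xy.
have [c [d [cd zE]]] := bedge_tperm_ex yz.
have zx : tperm c d * y != x.
  apply/eqP => zx; move: xy yz => /andP[_ +] /andP[_].
  by rewrite zE zx => /ltn_trans/[apply]; rewrite ltnn.
rewrite yE mulgA in zx.
have [ca|ca] := eqVneq c a.
  subst c; have [db|db] := eqVneq d b; first by rewrite db tperm2 mul1g eqxx in zx.
  by apply: bmid_3cycle ab cd _ yE zE xy yz; rewrite eq_sym.
have [cb|cb] := eqVneq c b.
  subst c; have [da|da] := eqVneq d a; first by rewrite da tpermC tperm2 mul1g eqxx in zx.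
  rewrite tpermC in yE; rewrite eq_sym in ab.
  by apply: bmid_3cycle ab cd _ yE zE xy yz; rewrite eq_sym.
have [da|da] := eqVneq d a.
  subst d; rewrite tpermC in zE; rewrite eq_sym in cd.
  by apply: bmid_3cycle ab cd _ yE zE xy yz; rewrite eq_sym.
have [db|db] := eqVneq d b.
  subst d; rewrite tpermC in zE; rewrite tpermC in yE; rewrite eq_sym in cd.
  by apply: bmid_3cycle da cd _ yE zE xy yz; rewrite eq_sym.
exact: bmid_disjoint ab cd ca cb da db yE zE xy yz.
Qed.

End BruhatMiddles.

Section FlipMid.
Variable n : nat.
Local Notation Sn := {perm 'I_n}.

Lemma flip_midP (x y z : Sn) : bedge x y -> bedge y z ->
  flip_mid x y z != y /\ forall w, bmid x z w = (w == y) || (w == flip_mid x y z).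
Proof.
move=> xy yz; have [y' y'y mids] := bmid_two xy yz.
suff -> : flip_mid x y z = y' by [].
rewrite /flip_mid; case: pickP => [w /and3P[wy xw wz] | none] /=.
  by move: (mids w); rewrite /bmid xw wz (negbTE wy) => /esym/eqP.
move: (mids y'); rewrite eqxx orbT => /andP[xy' y'z].
by move: (none y'); rewrite y'y xy' y'z.
Qed.

Lemma flip_midK (x y z : Sn) : bedge x y -> bedge y z -> flip_mid x (flip_mid x y z) z = y.
Proof.
move=> xy yz; have [y'y mids] := flip_midP xy yz.
have /andP[xy' y'z] : bmid x z (flip_mid x y z) by rewrite mids eqxx orbT.
have [_ mids'] := flip_midP xy' y'z.
by move: (mids' y); rewrite /bmid xy yz eq_sym (negbTE y'y) => /esym/eqP.
Qed.

End FlipMid.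

Section Paths.
Variables n h : nat.
Local Notation Sn := {perm 'I_n}.
Implicit Types (G : h.+1.-tuple Sn) (u v : Sn).

Lemma tat_val (T : Type) (t : h.+1.-tuple T) (k : 'I_h.+1) : tat t k = tnth t k.
Proof. by rewrite /tat inord_val. Qed.

Lemma tnth_flip G i (k : 'I_h.+1) : tnth (flip i G) k =
  if (k : nat) == i then flip_mid (tat G i.-1) (tat G i) (tat G i.+1) else tnth G k.
Proof. by rewrite tnth_mktuple. Qed.

Lemma tat_flip G i k : k <= h -> tat (flip i G) k =
  if k == i then flip_mid (tat G i.-1) (tat G i) (tat G i.+1) else tat G k.
Proof. by move=> kh; rewrite {1}/tat tnth_flip inordK. Qed.

Lemma bpath_ends u v G : G \in Pset h u v -> tat G 0 = u /\ tat G h = v.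
Proof. by rewrite inE => /and3P[/eqP -> /eqP -> _]. Qed.

Lemma bpath_edge u v G k : G \in Pset h u v -> k < h -> bedge (tat G k) (tat G k.+1).
Proof. by rewrite inE => /and3P[_ _ /forallP E] kh; exact: (E (Ordinal kh)). Qed.

Lemma bpath_mid u v G i : G \in Pset h u v -> 0 < i < h ->
  bedge (tat G i.-1) (tat G i) /\ bedge (tat G i) (tat G i.+1).
Proof.
move=> GP /andP[i0 ih]; split; last exact: bpath_edge GP ih.
by have := bpath_edge GP (leq_ltn_trans (leq_pred i) ih); rewrite prednK.
Qed.

Lemma flip_neq u v G i : G \in Pset h u v -> 0 < i < h -> tat (flip i G) i != tat G i.
Proof.
move=> GP ih; have [e1 e2] := bpath_mid GP ih.
by rewrite tat_flip ?eqxx; [case: (flip_midP e1 e2) | lia].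
Qed.

Lemma flip_Pset u v G i : G \in Pset h u v -> 0 < i < h -> flip i G \in Pset h u v.
Proof.
move=> GP ih; have [G0 Gh] := bpath_ends GP; have [e1 e2] := bpath_mid GP ih.
have /andP[m1 m2] : bmid (tat G i.-1) (tat G i.+1) (flip_mid (tat G i.-1) (tat G i) (tat G i.+1)).
  by have [_ ->] := flip_midP e1 e2; rewrite eqxx orbT.
rewrite inE; apply/and3P; split.
- by rewrite tat_flip // ifF ?G0 //; lia.
- by rewrite tat_flip // ifF ?Gh //; lia.
apply/forallP => k; have kh := ltn_ord k.
rewrite !tat_flip; try lia.
have [->|ki] := eqVneq (k : nat) i; first by rewrite ifF //; lia.
have [ki1|ki1] := eqVneq k.+1 i; last exact: bpath_edge GP kh.
by have -> : (k : nat) = i.-1 by lia.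
Qed.

Lemma flipK u v G i : G \in Pset h u v -> 0 < i < h -> flip i (flip i G) = G.
Proof.
move=> GP ih; have [e1 e2] := bpath_mid GP ih.
apply: eq_from_tnth => k; rewrite tnth_flip.
have [ki|/negbTE ki] := eqVneq (k : nat) i; last by rewrite tnth_flip ki.
rewrite !tat_flip ?eqxx; try lia.
have [-> ->] : (i.-1 == i) = false /\ (i.+1 == i) = false by split; lia.
by rewrite flip_midK // -ki tat_val.
Qed.

Lemma tnth_iTS G k : tnth (iTS G) k = (tnth G k, k).
Proof. by rewrite tnth_mktuple. Qed.

Lemma tat_iTS G k : tat (iTS G) k = (tat G k, inord k).
Proof. by rewrite /tat tnth_iTS. Qed.

Lemma iTS_inj : injective (@iTS n h).
Proof.
move=> G1 G2 E; apply: eq_from_tnth => k.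
by have := congr1 (fun P => (tnth P k).1) E; rewrite !tnth_iTS.
Qed.

End Paths.

Section Flipclass.
Variables (n h : nat) (u v : {perm 'I_n}) (F : {set h.+1.-tuple {perm 'I_n}}).
Local Notation Sn := {perm 'I_n}.
Implicit Types (G : h.+1.-tuple Sn) (w : seq nat).
Hypothesis FC : flipclass F u v.

Lemma foldr_flip_Pset w G : all (fun i => 1 <= i <= h.-1) w -> G \in Pset h u v ->
  foldr (@flip n h) G w \in Pset h u v.
Proof.
elim: w => //= i w IH /andP[ir wr] GP.
by apply: flip_Pset; [exact: IH | lia].
Qed.

Lemma foldr_flip_rev w G : all (fun i => 1 <= i <= h.-1) w -> G \in Pset h u v ->
  foldr (@flip n h) (foldr (@flip n h) G w) (rev w) = G.
Proof.
elim: w G => //= i w IH G /andP[ir wr] GP.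
rewrite rev_cons -cats1 foldr_cat /= (flipK (foldr_flip_Pset wr GP)); first exact: IH.
lia.
Qed.

Lemma flipclass_Pset G : G \in F -> G \in Pset h u v.
Proof. by case: FC => G0 G0P FE /FE[w [wr <-]]; exact: foldr_flip_Pset. Qed.

Lemma flipclass_flip G i : G \in F -> 0 < i < h -> flip i G \in F.
Proof.
case: FC => G0 _ FE /FE[w [wr <-]] ih; apply/FE.
by exists (i :: w); split => //=; rewrite wr andbT; lia.
Qed.

Lemma flipclass_foldr w G : G \in F -> all (fun i => 1 <= i <= h.-1) w ->
  foldr (@flip n h) G w \in F.
Proof.
elim: w => //= i w IH GF /andP[ir wr]; apply: flipclass_flip; [exact: IH | lia].
Qed.

Lemma flipclass_reach G G' : G \in F -> G' \in F -> gen_reach (@flip n h) 1 h.-1 G G'.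
Proof.
case: FC => G0 G0P FE /FE[w [wr <-]] /FE[w' [wr' <-]].
exists (w' ++ rev w); split; first by rewrite all_cat wr' all_rev wr.
by rewrite foldr_cat foldr_flip_rev.
Qed.

Lemma flipclass_nonempty : exists G, G \in F.
Proof. by case: FC => G0 _ FE; exists G0; apply/FE; exists [::]. Qed.

End Flipclass.

Section TimeSupport.
Variables (n h : nat) (u v : {perm 'I_n}) (F : {set h.+1.-tuple {perm 'I_n}}).
Local Notation Sn := {perm 'I_n}.
Local Notation V := (Sn * 'I_h.+1)%type.
Implicit Types (G : h.+1.-tuple Sn) (p q w : V).
Hypothesis FC : flipclass F u v.

Lemma TSedge_time p q : TSedge F p q -> q.2 = p.2.+1 :> nat.
Proof. by case/andP => /eqP. Qed.

Lemma TSedge_bedge p q : TSedge F p q -> bedge p.1 q.1.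
Proof.
case/andP => /eqP pq /exists_inP[G GF /andP[/eqP <- /eqP <-]].
rewrite -!tat_val pq; apply: bpath_edge (flipclass_Pset FC GF) _.
by rewrite -ltnS -pq.
Qed.

Lemma TSedge_vert p q : TSedge F p q -> q \in TSvert F.
Proof.
by case/andP => _ /exists_inP[G GF /andP[_ Gq]]; rewrite inE; apply/exists_inP; exists G.
Qed.

Lemma TSpath_time p s : path (TSedge F) p s -> (last p s).2 = p.2 + size s :> nat.
Proof.
elim: s p => [|q s IH] p /=; first by rewrite addn0.
by case/andP => /TSedge_time pq /IH ->; rewrite pq addSnnS.
Qed.

Lemma TSleP p q : TSle F p q ->
  exists2 s, path (TSedge F) p s & q = last p s /\ q.2 = p.2 + size s :> nat.
Proof. by case/connectP => s P qE; exists s; rewrite // qE TSpath_time. Qed.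

Lemma TSle_time p q : TSle F p q -> p.2 <= q.2.
Proof. by case/TSleP => s _ [_ ->]; rewrite leq_addr. Qed.

Lemma TSle_eq p q : TSle F p q -> p.2 = q.2 :> nat -> p = q.
Proof.
case/TSleP => s _ [qE ts] pq; have : size s = 0 by lia.
by rewrite qE; case: s {qE ts}.
Qed.

Lemma TSle_succ p q : TSle F p q -> q.2 = p.2.+1 :> nat -> TSedge F p q.
Proof.
case/TSleP => s P [qE ts] pq; have : size s = 1 by lia.
by rewrite qE; case: s P {qE ts} => [|a [|]] //= /andP[].
Qed.

Lemma TSle_gap2 p q : TSle F p q -> q.2 = p.2.+2 :> nat ->
  exists2 w, TSedge F p w & TSedge F w q.
Proof.
case/TSleP => s P [qE ts] pq; have : size s = 2 by lia.
by rewrite qE; case: s P {qE ts} => [|a [|b [|]]] //= /and3P[pa ab _]; exists a.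
Qed.

Lemma TSinterval_gap2 p q w : q.2 = p.2.+2 :> nat ->
  (w \in TSinterval F p q :\ p :\ q) = TSedge F p w && TSedge F w q.
Proof.
move=> pq; rewrite !in_setD1 inE; apply/idP/andP.
  case/and4P => wq wp _ /andP[pw wq'].
  have := TSle_time pw; have := TSle_time wq'.
  have /negP pw2 : p.2 != w.2 :> nat by apply: contraNneq wp => /(TSle_eq pw) ->.
  have /negP wq2 : w.2 != q.2 :> nat by apply: contraNneq wq => /(TSle_eq wq') ->.
  by split; [apply: TSle_succ pw _ | apply: TSle_succ wq' _]; lia.
case=> pw wq; have := TSedge_time pw; have := TSedge_time wq.
rewrite (TSedge_vert pw) /TSle (connect1 pw) (connect1 wq) !andbT.
by move=> t1 t2; apply/andP; split; apply/eqP => E; move: t1 t2; rewrite E; lia.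
Qed.

Lemma iTS_edge G k : G \in F -> k < h -> TSedge F (tat (iTS G) k) (tat (iTS G) k.+1).
Proof.
move=> GF kh; rewrite !tat_iTS; apply/andP; split; first by rewrite /= !inordK //; lia.
by apply/exists_inP; exists G; rewrite //= /tat !eqxx.
Qed.

Lemma iTS_PTS G : G \in F -> iTS G \in PTS F u v.
Proof.
move=> GF; have [G0 Gh] := bpath_ends (flipclass_Pset FC GF).
rewrite inE; apply/and3P; split.
- by rewrite tat_iTS G0; apply/eqP; congr pair; apply: val_inj; rewrite /= inordK.
- by rewrite tat_iTS Gh; apply/eqP; congr pair; apply: val_inj; rewrite /= inordK.
by apply/forallP => k; apply: iTS_edge.
Qed.

Lemma TSinterval_flip G i : G \in F -> 0 < i < h ->
  TSinterval F (tat (iTS G) i.-1) (tat (iTS G) i.+1) :\ tat (iTS G) i.-1 :\ tat (iTS G) i.+1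
  = [set tat (iTS G) i; tat (iTS (flip i G)) i].
Proof.
move=> GF ih; have [e1 e2] := bpath_mid (flipclass_Pset FC GF) ih.
have [_ mids] := flip_midP e1 e2.
have FG' := flipclass_flip FC GF ih.
have [t1 t2 t3] : [/\ tat (iTS (flip i G)) i.-1 = tat (iTS G) i.-1,
    tat (iTS (flip i G)) i = (flip_mid (tat G i.-1) (tat G i) (tat G i.+1), inord i)
  & tat (iTS (flip i G)) i.+1 = tat (iTS G) i.+1].
  by rewrite !tat_iTS !tat_flip ?eqxx ?ifF //; lia.
have [i0 i1] : i.-1 < h /\ i.-1.+1 = i by lia.
have edges_around G0 : G0 \in F ->
    TSedge F (tat (iTS G0) i.-1) (tat (iTS G0) i) /\
    TSedge F (tat (iTS G0) i) (tat (iTS G0) i.+1).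
  by move=> G0F; split; [move: (iTS_edge G0F i0); rewrite i1 | apply: iTS_edge; lia].
apply/setP => w; rewrite TSinterval_gap2; last by rewrite !tat_iTS /= !inordK; lia.
apply/andP/set2P => [[pw wq] | [] ->]; last 2 first.
- exact: edges_around.
- by rewrite -t1 -t3; apply: edges_around.
have wi : w.2 = inord i.
  by apply: val_inj => /=; rewrite (TSedge_time pw) tat_iTS /= !inordK; lia.
have xw := TSedge_bedge pw; have wz := TSedge_bedge wq; rewrite !tat_iTS /= in xw wz.
have := mids w.1; rewrite /bmid xw wz => /esym/orP[]/eqP w1; [left | right];
  by rewrite [w]surjective_pairing w1 wi ?t2 ?tat_iTS.
Qed.

Lemma TSmid_pair p q y y' : TSinterval F p q :\ p :\ q = [set y; y'] -> TSmid F p y q = y'.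
Proof.
move=> pqE; rewrite /TSmid; case: pickP => [w /andP[wI /and3P[wp wq wy]] | none] /=.
  have : w \in [set y; y'] by rewrite -pqE !in_setD1 wp wq wI.
  by rewrite !inE (negbTE wy) => /eqP.
have [//|y'y] := eqVneq y y'.
have : y' \in [set y; y'] by rewrite !inE eqxx orbT.
rewrite -pqE !in_setD1 => /and3P[y'q y'p y'I].
by move: (none y'); rewrite y'I y'p y'q eq_sym y'y.
Qed.

Lemma fbar_iTS G i : G \in F -> 0 < i < h -> fbar F i (iTS G) = iTS (flip i G).
Proof.
move=> GF ih; apply: eq_from_tnth => k.
rewrite tnth_mktuple !tnth_iTS tnth_flip; case: eqP => [ki|//].
rewrite (TSmid_pair (TSinterval_flip GF ih)) tat_iTS tat_flip ?eqxx; last lia.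
by rewrite -ki inord_val.
Qed.

Lemma foldr_fbar_iTS G (s : seq nat) : G \in F -> all (fun i => 1 <= i <= h.-1) s ->
  foldr (fbar F) (iTS G) s = iTS (foldr (@flip n h) G s).
Proof.
move=> GF; elim: s => //= i s IH /andP[ir sr].
by rewrite IH // fbar_iTS ?(flipclass_foldr FC) //; lia.
Qed.

Lemma PTS_through p w q : p \in TSvert F -> q \in TSvert F -> TSedge F p w -> TSedge F w q ->
  exists2 P, P \in PTS F u v & [/\ tat P p.2 = p, tat P p.2.+1 = w & tat P p.2.+2 = q].
Proof.
rewrite !inE => /exists_inP[G1 G1F /eqP G1p] /exists_inP[G2 G2F /eqP G2q] pw wq.
have /and3P[G1u _ _] : is_TSpath F u v (iTS G1) by have := iTS_PTS G1F; rewrite inE.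
have /and3P[_ G2v _] : is_TSpath F u v (iTS G2) by have := iTS_PTS G2F; rewrite inE.
have qi : q.2 = p.2.+2 :> nat by rewrite (TSedge_time wq) (TSedge_time pw).
have qh : p.2.+2 <= h by rewrite -qi -ltnS.
have Pp : tat (iTS G1) p.2 = p by rewrite tat_iTS tat_val inord_val G1p -surjective_pairing.
have Pq : tat (iTS G2) p.2.+2 = q.
  by rewrite -qi tat_iTS tat_val inord_val G2q -surjective_pairing.
move: (p.2 : nat) qh Pp Pq pw wq => i qh Pp Pq pw wq.
pose P := [tuple if (k : nat) <= i then tnth (iTS G1) k
                 else if (k : nat) == i.+1 then w else tnth (iTS G2) k | k < h.+1].
have tatP k : k <= h -> tat P k =
    if k <= i then tat (iTS G1) k else if k == i.+1 then w else tat (iTS G2) k.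
  by move=> kh; rewrite /tat tnth_mktuple inordK.
exists P; last by rewrite !tatP ?leqnn ?ltnn ?eqxx ?ifN //=; lia.
rewrite inE; apply/and3P; split; first by rewrite tatP.
  by rewrite tatP // !ifN //; lia.
apply/forallP => k; have kh := ltn_ord k; have kh' := ltnW kh; rewrite !tatP //.
case: (ltngtP k i) => [_|ik|->]; first exact: iTS_edge.
  have [ki|ki] := eqVneq (k : nat) i.+1; first by rewrite ki ifN ?Pq //; lia.
  by rewrite ifN //; [apply: iTS_edge | lia].
by rewrite eqxx Pp.
Qed.

Lemma diamond_of_effective : [set iTS G | G in F] = PTS F u v ->
  forall p q, p \in TSvert F -> q \in TSvert F -> q.2 = p.2.+2 :> nat -> TSle F p q ->
  diamond F p q.
Proof.
move=> img p q pV qV pq2 /TSle_gap2/(_ pq2)[w pw wq].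
have [P] := PTS_through pV qV pw wq; rewrite -img => /imsetP[G GF ->] [Pp _ Pq].
have ih : 0 < p.2.+1 < h by have := ltn_ord q.2; rewrite pq2; lia.
rewrite /diamond -Pp -Pq -[p.2 : nat]/(p.2.+1.-1) (TSinterval_flip GF ih) cards2.
have flipG := flip_neq (flipclass_Pset FC GF) ih.
by rewrite !tat_iTS xpair_eqE eqxx andbT [tat G _ == _]eq_sym flipG.
Qed.

End TimeSupport.

Theorem lemma5p7 (n h : nat) (u v : {perm 'I_n})
    (F : {set h.+1.-tuple {perm 'I_n}}) :
  bruhat_lt u v -> flipclass F u v ->
  ( ({in F &, injective (@iTS n h)} /\ [set iTS G | G in F] = PTS F u v)
    <->
    ( (forall p q : {perm 'I_n} * 'I_h.+1,
         p \in TSvert F -> q \in TSvert F ->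
         (q.2 : nat) = (p.2 : nat).+2 -> TSle F p q -> diamond F p q)
      /\
      (forall p q, p \in PTS F u v -> q \in PTS F u v ->
         gen_reach (@fbar n h F) 1 h.-1 p q) ) ).
Proof.
move=> _ FC; split.
- case=> _ img; split; first exact: diamond_of_effective FC img.
  move=> p q; rewrite -img => /imsetP[G GF ->] /imsetP[G' G'F ->].
  have [s [sr <-]] := flipclass_reach FC GF G'F.
  by exists s; rewrite (foldr_fbar_iTS FC).
case=> _ reach; split; first by move=> G1 G2 _ _; apply: iTS_inj.
apply/setP => P; apply/imsetP/idP => [[G GF ->] | PP]; first exact: (iTS_PTS FC GF).
have [G0 G0F] := flipclass_nonempty FC.
have [s [sr <-]] := reach _ _ (iTS_PTS FC G0F) PP.
by exists (foldr (@flip n h) G0 s); rewrite ?(flipclass_foldr FC) ?(foldr_fbar_iTS FC).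
Qed.
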